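(* Let $f\colon(X,\overline p)\to(Y,\overline q)$ be a stratified homotopy equivalence between perverse spaces with $D\overline p=f^*D\overline q$. Then the simplicial map $\mathscr G_{\overline p,\overline q}f\colon\mathscr G_{\overline p}X\to\mathscr G_{\overline q}Y$, $\sigma\mapsto f\circ\sigma$, is a homotopy equivalence.
   Context: Filtered spaces. A filtered space of formal dimension $n$ is a nonempty space $X$ with closed subsets $\emptyset=X_{-1}\subseteq\cdots\subseteq X_{n-1}\subsetneq X_n=X$. Strata are the nonempty connected components of $X_i\setminus X_{i-1}$, with codimension $n-i$. Strata in $X\setminus X_{n-1}$ are regular. Stratified maps and homotopies. A stratified map $f$ sends each stratum $S$ into a stratum $S^f$ with $\operatorname{codim}S^f\le\operatorname{codim}S$. A stratified homotopy between $f$ and $g$ is a stratified map $X\times[0,1]\to Y$ restricting to $f$ and $g$, where $X\times[0,1]$ is filtered by $X_i\times[0,1]$. We write $f\simeq_s g$. Stratified homotopy equivalences. A stratified homotopy equivalence is a stratified map $f\colon X\to Y$ for which there exists a stratified map $g\colon Y\to X$ such that: - $g\circ f\simeq_s\mathrm{id}_X$ and $f\circ g\simeq_s\mathrm{id}_Y$; - $\operatorname{codim}S=\operatorname{codim}S^f$ for all strata $S$ of $X$, and $\operatorname{codim}T=\operatorname{codim}T^g$ for all strata $T$ of $Y$. Perversities. A perversity is a map $\overline p$ from strata to $\mathbb Z\cup\{\pm\infty\}$ vanishing on regular strata. The top perversity is $\overline t(S)=\operatorname{codim}S-2$, and $D\overline p=\overline t-\overline p$. The pullback perversity is $f^*\overline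 q(S)=\overline q(S^f)$. Full simplices and the Gajer space. A simplex $\sigma\colon\Delta^j\to X$ is $\overline p$-allowable if $\dim\sigma^{-1}S\le j-\operatorname{codim}S+\overline p(S)$ for all singular strata. Here $\dim$ is polyhedral dimension, with $\dim\emptyset=-\infty$. A simplex is $\overline p$-full if it and all its iterated faces are allowable. $\mathscr G_{\overline p}X\subseteq\mathrm{Sing}\,X$ consists of the $\overline p$-full simplices. *)

From HB Require Import structures.
From mathcomp Require Import all_boot all_order all_algebra.
From mathcomp Require Import all_classical all_reals all_analysis.
From mathcomp Require Import Rstruct Rstruct_topology.
Set Implicit Arguments. Unset Strict Implicit. Unset Printing Implicit Defensive.
Import Order.TTheory GRing.Theory Num.Theory.
Local Open Scope classical_set_scope.
Local Open Scope ring_scope.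

Notation RR := Rdefinitions.R.

(* A filtration of formal dimension n is encoded by s : nat -> set X with
   s 0 = X_{-1} = set0 and s (i.+1) = X_i (i = 0..n). Values s k, k > n+1,
   are irrelevant. *)
Definition is_filtration (X : topologicalType) (n : nat) (s : nat -> set X) :=
  [/\ s 0%N = set0,
      (forall i, (i <= n.+1)%N -> closed (s i)),
      (forall i j, (i <= j)%N -> (j <= n.+1)%N -> s i `<=` s j),
      s n.+1 = setT & s n <> setT].

Definition stratum_at (X : topologicalType) (n : nat) (s : nat -> set X)
  (i : nat) (S : set X) :=
  (i <= n)%N /\ exists x, (s i.+1 `\` s i) x /\
     S = connected_component (s i.+1 `\` s i) x.

Definition is_stratum (X : topologicalType) n (s : nat -> set X) (S : set X) :=
  exists i, stratum_at n s i S.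

(* codimension n - i (the level i of a stratum is unique) *)
Definition codim (X : topologicalType) n (s : nat -> set X) (S : set X) : nat :=
  (n - xget 0%N [set i | stratum_at n s i S])%N.

Definition stratum_image (X Y : topologicalType) (nY : nat) (sY : nat -> set Y)
  (f : X -> Y) (S : set X) : set Y :=
  xget set0 [set T | is_stratum nY sY T /\ f @` S `<=` T].

Definition stratified_map (X Y : topologicalType) nX (sX : nat -> set X)
  nY (sY : nat -> set Y) (f : X -> Y) :=
  continuous f /\
  forall S, is_stratum nX sX S ->
    exists T, [/\ is_stratum nY sY T, f @` S `<=` T & (codim nY sY T <= codim nX sX S)%N].

Definition unit_interval : set RR := `[0%R, 1%R].

Definition strat_homotopic (X Y : topologicalType) nX (sX : nat -> set X)
  nY (sY : nat -> set Y) (f g : X -> Y) :=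
  exists H : X * set_type unit_interval -> Y,
    [/\ stratified_map nX (fun i => sX i `*` setT) nY sY H,
        (forall x (t : set_type unit_interval), set_val t = 0%R -> H (x, t) = f x) &
        (forall x (t : set_type unit_interval), set_val t = 1%R -> H (x, t) = g x)].

Definition strat_heq (X Y : topologicalType) nX (sX : nat -> set X)
  nY (sY : nat -> set Y) (f : X -> Y) :=
  stratified_map nX sX nY sY f /\
  exists g : Y -> X,
    [/\ stratified_map nY sY nX sX g,
        strat_homotopic nX sX nX sX (g \o f) id,
        strat_homotopic nY sY nY sY (f \o g) id,
        (forall S, is_stratum nX sX S -> codim nY sY (stratum_image nY sY f S) = codim nX sX S) &
        (forall T, is_stratum nY sY T -> codim nX sX (stratum_image nX sX g T) = codim nY sY T)].

Definition is_perversity (X : topologicalType) n (s : nat -> set X)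
  (p : set X -> \bar int) :=
  forall S, is_stratum n s S -> codim n s S = 0%N -> p S = 0%E.

Definition top_perv (X : topologicalType) n (s : nat -> set X) (S : set X) : \bar int :=
  ((codim n s S)%:Z - 2)%:E.

Definition dual_perv (X : topologicalType) n (s : nat -> set X)
  (p : set X -> \bar int) (S : set X) : \bar int :=
  (top_perv n s S - p S)%E.

Definition pullback_perv (X Y : topologicalType) (nY : nat) (sY : nat -> set Y)
  (f : X -> Y) (q : set Y -> \bar int) (S : set X) : \bar int :=
  q (stratum_image nY sY f S).

Definition tsimplex (j : nat) : set 'rV[RR]_j.+1 :=
  [set x | (forall i, 0 <= x 0 i)%R /\ (\sum_i x 0 i = 1)%R].

Arguments tsimplex : clear implicits.

Definition Delta (j : nat) := set_type (tsimplex j).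

Definition simp_raw m n (th : 'I_m.+1 -> 'I_n.+1) (x : 'rV[RR]_m.+1) : 'rV[RR]_n.+1 :=
  \row_k \sum_(i | th i == k) x 0 i.

Lemma simp_raw_tsimplex m n (th : 'I_m.+1 -> 'I_n.+1) x :
  tsimplex m x -> tsimplex n (simp_raw th x).
Proof.
move=> [x0 x1]; split.
  by move=> k; rewrite mxE; apply: sumr_ge0 => i _.
rewrite -x1 (partition_big th predT) //=.
by apply: eq_bigr => k _; rewrite mxE.
Qed.

Definition simp_map m n (th : 'I_m.+1 -> 'I_n.+1) (x : Delta m) : Delta n :=
  exist _ (simp_raw th (set_val x))
    (mem_set (simp_raw_tsimplex th (set_valP x))).

Definition affine_simplex j k (t : k.+1.-tuple 'rV[RR]_j.+1) : set 'rV[RR]_j.+1 :=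
  [set y | exists c : 'I_k.+1 -> RR, [/\ (forall i, 0 <= c i)%R,
      (\sum_i c i = 1)%R & y = \sum_i c i *: tnth t i]].

(* A has polyhedral dimension <= k: A is contained in a (compact) polyhedron
   of dimension <= k, i.e. a finite union of affine k-simplices *)
Definition polydim_le_nat j (A : set 'rV[RR]_j.+1) (k : nat) :=
  exists ts : seq (k.+1.-tuple 'rV[RR]_j.+1),
    A `<=` \bigcup_(t in [set t | t \in ts]) affine_simplex t.

(* dim A <= d, with dim set0 = -oo *)
Definition polydim_le j (A : set 'rV[RR]_j.+1) (d : \bar int) : Prop :=
  match d with
  | -oo%E => A = set0
  | +oo%E => True
  | (r%:E)%E => if (r < 0)%R then A = set0 else polydim_le_nat A `|r|%N
  end.

Definition allowable (X : topologicalType) n (s : nat -> set X)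
  (p : set X -> \bar int) j (sigma : Delta j -> X) :=
  forall S, is_stratum n s S -> (0 < codim n s S)%N ->
    polydim_le (set_val @` (sigma @^-1` S))
      (((j%:Z - (codim n s S)%:Z)%:E) + p S)%E.

Definition full (X : topologicalType) n (s : nat -> set X)
  (p : set X -> \bar int) j (sigma : Delta j -> X) :=
  forall m (th : 'I_m.+1 -> 'I_j.+1), {homo th : a b / (a < b)%N} ->
    allowable n s p (sigma \o simp_map th).

Definition Gajer (X : topologicalType) n (s : nat -> set X)
  (p : set X -> \bar int) (j : nat) : set (Delta j -> X) :=
  [set sigma | continuous sigma /\ full n s p sigma].

Definition monotone_ord m n (th : 'I_m.+1 -> 'I_n.+1) := {homo th : a b / (a <= b)%N}.

Definition ss_maps_into (X Y : Type) (K : forall n, set (Delta n -> X))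
  (L : forall n, set (Delta n -> Y)) (F : forall n, (Delta n -> X) -> (Delta n -> Y)) :=
  forall n sigma, K n sigma -> L n (F n sigma).

Definition ss_natural (X Y : Type) (K : forall n, set (Delta n -> X))
  (F : forall n, (Delta n -> X) -> (Delta n -> Y)) :=
  forall m n (th : 'I_m.+1 -> 'I_n.+1), monotone_ord th ->
    forall sigma, K n sigma -> F m (sigma \o simp_map th) = F n sigma \o simp_map th.

(* simplicial homotopy K x Delta[1] -> L from F to G; an n-tsimplex of
   Delta[1] is a monotone map [n] -> [1] *)
Definition ss_homotopy (X Y : Type) (K : forall n, set (Delta n -> X))
  (L : forall n, set (Delta n -> Y)) (F G : forall n, (Delta n -> X) -> (Delta n -> Y)) :=
  exists H : forall n, (Delta n -> X) -> ('I_n.+1 -> 'I_2) -> (Delta n -> Y),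
  [/\ (forall n sigma a, K n sigma -> monotone_ord a -> L n (H n sigma a)),
      (forall m n (th : 'I_m.+1 -> 'I_n.+1), monotone_ord th ->
        forall sigma a, K n sigma -> monotone_ord a ->
          H m (sigma \o simp_map th) (a \o th) = H n sigma a \o simp_map th),
      (forall n sigma, K n sigma -> H n sigma (fun _ => ord0) = F n sigma) &
      (forall n sigma, K n sigma -> H n sigma (fun _ => ord_max) = G n sigma)].

Definition ss_heq (X Y : Type) (K : forall n, set (Delta n -> X))
  (L : forall n, set (Delta n -> Y)) (F : forall n, (Delta n -> X) -> (Delta n -> Y)) :=
  [/\ ss_maps_into K L F, ss_natural K F &
    exists G : forall n, (Delta n -> Y) -> (Delta n -> X),
      [/\ ss_maps_into L K G, ss_natural L G,
          ss_homotopy K K (fun n => G n \o F n) (fun n => id) &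
          ss_homotopy L L (fun n => F n \o G n) (fun n => id)]].

From HB Require Import structures.
From mathcomp Require Import all_boot all_order all_algebra.
From mathcomp Require Import all_classical all_reals all_analysis.
From mathcomp Require Import Rstruct Rstruct_topology.
Set Implicit Arguments. Unset Strict Implicit. Unset Printing Implicit Defensive.
Import Order.TTheory GRing.Theory Num.Theory.
Local Open Scope classical_set_scope.
Local Open Scope ring_scope.

(* A stratified homotopy H : X * [0,1] -> Y keeps every track t |-> H (x, t)
   inside one stratum, because {x} * [0,1] is connected and lies in a single
   stratum of X * [0,1].  Applied to g f ~ id, this puts g (f x) in the stratum
   of x, so f reflects strata: the preimage of a stratum T of Y lies in one
   stratum S of X, of the same codimension and, by D p = f^* D q, of the same
   perversity.  Hence f \o sigma meets T only where sigma meets S, and f \o -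
   preserves full simplices; symmetrically for g.  The homotopy g f ~ id gives
   the simplicial homotopy sigma |-> H (sigma x, t_a x), where t_a x is the
   barycentric mass of the vertices sent to 1 by a : [n] -> [1]; it stays in
   the strata met by sigma, hence in the Gajer space. *)

Lemma clamp01_subproof (u : RR) : unit_interval (Num.max 0 (Num.min u 1)).
Proof. by rewrite /unit_interval /= in_itv /= le_max lexx ge_max ler01 ge_min lexx orbT. Qed.

Definition clamp01 (u : RR) : set_type unit_interval :=
  exist _ (Num.max 0 (Num.min u 1)) (mem_set (clamp01_subproof u)).

Lemma val_clamp01 u : unit_interval u -> set_val (clamp01 u) = u.
Proof.
rewrite /unit_interval /= in_itv /= => /andP[u_ge0 u_le1].
by transitivity (Num.max 0 (Num.min u 1)) => //; rewrite min_l // max_r.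
Qed.

Lemma clamp01_val (t : set_type unit_interval) : clamp01 (set_val t) = t.
Proof. by apply: val_inj; apply: val_clamp01; exact: set_valP. Qed.

Lemma connected_unit_interval : connected [set: set_type unit_interval].
Proof.
have -> : [set: set_type unit_interval] = clamp01 @` [set: RR].
  by apply/seteqP; split=> // t _; exists (set_val t) => //; exact: clamp01_val.
apply: connected_continuous_connected.
  by apply/connected_intervalP => x y _ _ z _.
apply: continuous_subspaceT; apply: continuous_comp_initial => x.
change (continuous_at x (fun u : RR => Num.max 0 (Num.min u 1))).
apply: (@continuous_max RR RR (cst 0) (fun u => Num.min u 1)).
  exact: cst_continuous.
by apply: (@continuous_min RR RR id (cst 1)) => //; exact: cst_continuous.
Qed.

Lemma polydim_le_subset j (A B : set 'rV[RR]_j.+1) d :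
  A `<=` B -> polydim_le B d -> polydim_le A d.
Proof.
move=> AB; case: d => [r| |] //=; last by move=> B0; rewrite -subset0 -B0.
case: ifP => _; first by move=> B0; rewrite -subset0 -B0.
by move=> [ts Bts]; exists ts; exact: subset_trans Bts.
Qed.

Lemma polydim_le_set0 j d : polydim_le (set0 : set 'rV[RR]_j.+1) d.
Proof. by case: d => [r| |] //=; case: ifP => // _; exists [::]. Qed.

Lemma subeI (c : int) (a b : \bar int) : (c%:E - a = c%:E - b)%E -> a = b.
Proof. by case: a b => [a| |] [b| |] //= [] /addrI /oppr_inj ->. Qed.

Section Strata.
Variables (X : topologicalType) (n : nat) (s : nat -> set X).

Lemma stratum_nonempty S : is_stratum n s S -> S !=set0.
Proof. by case=> i [_ [x [sx ->]]]; exists x; exact: connected_component_refl. Qed.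

Definition same_stratum (x y : X) := exists2 S, is_stratum n s S & S x /\ S y.

Hypothesis hs : is_filtration n s.

Lemma exists_stratum x : exists2 S, is_stratum n s S & S x.
Proof.
case: hs => s0 _ _ sT _.
have hx : exists k, `[< s k x >] by exists n.+1; apply/asboolP; rewrite sT.
case: (ex_minnP hx) => -[|i] /asboolP sx i_min; first by rewrite s0 in sx.
have i_le : (i.+1 <= n.+1)%N by apply: i_min; apply/asboolP; rewrite sT.
have x_i : (s i.+1 `\` s i) x by split=> // /asboolT /i_min; rewrite ltnn.
exists (connected_component (s i.+1 `\` s i) x); last exact: connected_component_refl.
by exists i; split=> //; exists x.
Qed.

Lemma eq_stratum S S' x :
  is_stratum n s S -> is_stratum n s S' -> S x -> S' x -> S = S'.
Proof.
case: hs => _ _ s_mono _ _.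
move=> [i [i_le [y [_ ->]]]] [k [k_le [y' [_ ->]]]] Sx S'x.
have [[sx nsx] [sx' nsx']] := (connected_component_sub Sx, connected_component_sub S'x).
have ik : i = k.
  case: (ltngtP i k) => // [lt_ik|lt_ki]; exfalso.
  - by apply: nsx'; apply: (s_mono i.+1 k) => //; exact: leqW.
  - by apply: nsx; apply: (s_mono k.+1 i) => //; exact: leqW.
by subst k; rewrite (same_connected_component Sx) (same_connected_component S'x).
Qed.

Lemma same_stratum_mem S x y :
  is_stratum n s S -> S x -> same_stratum x y -> S y.
Proof. by move=> hS Sx [S' hS' [S'x S'y]]; rewrite (eq_stratum hS hS' Sx S'x). Qed.

End Strata.

Lemma stratum_imageE (X Y : topologicalType) nY (sY : nat -> set Y) (f : X -> Y) S T :
  is_filtration nY sY -> S !=set0 -> is_stratum nY sY T -> f @` S `<=` T ->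
  stratum_image nY sY f S = T.
Proof.
move=> hY [x Sx] hT fST; rewrite /stratum_image.
have [hT' fST'] : [set T | is_stratum nY sY T /\ f @` S `<=` T]
    (xget set0 [set T | is_stratum nY sY T /\ f @` S `<=` T]).
  by apply: xgetPex; exists T.
by apply: (eq_stratum hY hT' hT (x := f x)); [apply: fST' | apply: fST]; exists x.
Qed.

Lemma strat_homotopy_track (X Y : topologicalType) nX (sX : nat -> set X)
    nY (sY : nat -> set Y) (H : X * set_type unit_interval -> Y) x t t' :
  is_filtration nX sX -> stratified_map nX (fun i => sX i `*` setT) nY sY H ->
  same_stratum nY sY (H (x, t)) (H (x, t')).
Proof.
move=> hX [_ H_strat].
have [S [i [i_le [x0 [_ ->]]]] Sx] := exists_stratum hX x.
have [sx nsx] := connected_component_sub Sx.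
pose A := (sX i.+1 `*` [set: set_type unit_interval]) `\` (sX i `*` setT).
have track_sub : pair x @` setT `<=` connected_component A (x, t).
  apply: connected_component_max.
  - by exists t.
  - by move=> _ [u _ <-]; split=> // -[].
  apply: connected_continuous_connected; first exact: connected_unit_interval.
  by apply: continuous_subspaceT => u; exact: (cvg_pair (@cvg_cst _ x _ (nbhs u) _) cvg_id).
have hA : is_stratum nX (fun i => sX i `*` setT) (connected_component A (x, t)).
  by exists i; split=> //; exists (x, t); split=> //; split=> [//|[]].
have [T [hT HT _]] := H_strat _ hA.
exists T => //; split; apply: HT.
- by exists (x, t) => //; apply: track_sub; exists t.
- by exists (x, t') => //; apply: track_sub; exists t'.
Qed.

Section HomotopicToIdentity.
Variables (X : topologicalType) (n : nat) (s : nat -> set X) (h : X -> X).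
Hypotheses (hs : is_filtration n s) (h_id : strat_homotopic n s n s h id).

Lemma strat_homotopic_id_track : exists H : X * set_type unit_interval -> X,
  [/\ continuous H, (forall x t, same_stratum n s (H (x, t)) x),
      (forall x t, set_val t = 0 -> H (x, t) = h x) &
      (forall x t, set_val t = 1 -> H (x, t) = x)].
Proof.
have [H [H_strat H0 H1]] := h_id; exists H; split=> //; first by case: H_strat.
have val1 : set_val (clamp01 1) = 1.
  by rewrite val_clamp01 // /unit_interval /= in_itv /= ler01 lexx.
move=> x t; rewrite -{2}(H1 x _ val1).
exact: (strat_homotopy_track x t (clamp01 1) hs H_strat).
Qed.

Lemma strat_homotopic_id_same_stratum x : same_stratum n s (h x) x.
Proof.
have [H [_ H_track H0 _]] := strat_homotopic_id_track.
have val0 : set_val (clamp01 0) = 0.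
  by rewrite val_clamp01 // /unit_interval /= in_itv /= ler01 lexx.
by rewrite -(H0 x _ val0).
Qed.

End HomotopicToIdentity.

Section StrataAndPerversities.
Variables (X Y : topologicalType).
Variables (nX : nat) (sX : nat -> set X) (nY : nat) (sY : nat -> set Y).
Variables (p : set X -> \bar int) (q : set Y -> \bar int).
Hypotheses (hX : is_filtration nX sX) (hY : is_filtration nY sY).

Definition reflects_strata (f : X -> Y) :=
  forall T, is_stratum nY sY T -> exists2 S, is_stratum nX sX S & f @^-1` T `<=` S.

Definition preserves_codim_perv (f : X -> Y) :=
  forall S T, is_stratum nX sX S -> is_stratum nY sY T -> f @` S `<=` T ->
    codim nY sY T = codim nX sX S /\ p S = q T.

Lemma reflects_strata_left_inverse (f : X -> Y) (g : Y -> X) :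
  stratified_map nY sY nX sX g -> (forall x, same_stratum nX sX (g (f x)) x) ->
  reflects_strata f.
Proof.
move=> [_ g_strat] gf T hT; have [S [hS gTS _]] := g_strat T hT.
by exists S => // x Tfx; apply: (same_stratum_mem hX hS) (gf x); apply: gTS; exists (f x).
Qed.

Lemma dual_pullback_preserves_codim_perv (f : X -> Y) :
  (forall S, is_stratum nX sX S -> codim nY sY (stratum_image nY sY f S) = codim nX sX S) ->
  (forall S, is_stratum nX sX S ->
     dual_perv nX sX p S = pullback_perv nY sY f (dual_perv nY sY q) S) ->
  preserves_codim_perv f.
Proof.
move=> f_codim f_dual S T hS hT fST.
have fSE := stratum_imageE hY (stratum_nonempty hS) hT fST.
have codimE : codim nY sY T = codim nX sX S by rewrite -fSE; exact: f_codim.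
split=> //; apply: (@subeI ((codim nX sX S)%:Z - 2)).
by have := f_dual S hS; rewrite /pullback_perv /dual_perv /top_perv fSE codimE.
Qed.

End StrataAndPerversities.

Lemma preserves_codim_perv_homotopy_inverse (X Y : topologicalType) nX (sX : nat -> set X)
    nY (sY : nat -> set Y) p q (f : X -> Y) (g : Y -> X) :
  is_filtration nX sX -> is_filtration nY sY ->
  stratified_map nX sX nY sY f -> preserves_codim_perv nX sX nY sY p q f ->
  (forall T, is_stratum nY sY T -> codim nX sX (stratum_image nX sX g T) = codim nY sY T) ->
  (forall y, same_stratum nY sY (f (g y)) y) ->
  preserves_codim_perv nY sY nX sX q p g.
Proof.
move=> hX hY [_ f_strat] f_pres g_codim fg T S hT hS gTS.
have [y Ty] := stratum_nonempty hT.
split; first by rewrite -(stratum_imageE hX (stratum_nonempty hT) hS gTS); exact: g_codim.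
have [V [hV fSV _]] := f_strat S hS.
have VT : V = T.
  apply: (eq_stratum hY hV hT _ Ty); apply: (same_stratum_mem hY hV) (fg y).
  by apply: fSV; exists (g y) => //; apply: gTS; exists y.
by have [_ ->] := f_pres S V hS hV fSV; rewrite VT.
Qed.

Section AllowabilityTransfer.
Variables (X Y : topologicalType).
Variables (nX : nat) (sX : nat -> set X) (nY : nat) (sY : nat -> set Y).
Variables (p : set X -> \bar int) (q : set Y -> \bar int).

Definition strata_controlled j (sigma : Delta j -> X) (tau : Delta j -> Y) :=
  forall T z, is_stratum nY sY T -> T (tau z) ->
    exists S, [/\ is_stratum nX sX S, codim nX sX S = codim nY sY T, p S = q T &
                  tau @^-1` T `<=` sigma @^-1` S].

Lemma allowable_controlled j (sigma : Delta j -> X) (tau : Delta j -> Y) :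
  strata_controlled sigma tau -> allowable nX sX p sigma -> allowable nY sY q tau.
Proof.
move=> ctrl sigma_allow T hT T_codim.
case: (pselect (exists z, T (tau z))) => [[z Tz]|tauT0].
  have [S [hS codimE pE tauTS]] := ctrl T z hT Tz.
  rewrite -codimE -pE; apply: polydim_le_subset (sigma_allow S hS _).
    exact: image_subset.
  by rewrite codimE.
rewrite (_ : _ @` _ = set0); first exact: polydim_le_set0.
by apply/seteqP; split=> // y [z Tz _]; apply: tauT0; exists z.
Qed.

Lemma full_controlled j (sigma : Delta j -> X) (tau : Delta j -> Y) :
  strata_controlled sigma tau -> full nX sX p sigma -> full nY sY q tau.
Proof.
move=> ctrl sigma_full m th th_mono; apply: allowable_controlled (sigma_full m th th_mono).
move=> T z hT Tz; have [S [hS codimE pE tauTS]] := ctrl T _ hT Tz.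
by exists S; split=> // w /tauTS.
Qed.

Lemma Gajer_comp (f : X -> Y) j (sigma : Delta j -> X) :
  is_filtration nY sY -> stratified_map nX sX nY sY f ->
  reflects_strata nX sX nY sY f -> preserves_codim_perv nX sX nY sY p q f ->
  Gajer nX sX p sigma -> Gajer nY sY q (f \o sigma).
Proof.
move=> hY [f_cont f_strat] f_refl f_pres [sigma_cont sigma_full]; split.
  by move=> z; apply: continuous_comp; [exact: sigma_cont | exact: f_cont].
apply: full_controlled sigma_full => T z hT Tz.
have [S hS fTS] := f_refl T hT.
have [T' [hT' fST' _]] := f_strat S hS.
have T'E : T' = T.
  by apply: (eq_stratum hY hT' hT _ Tz); apply: fST'; exists (sigma z) => //; exact: fTS.
rewrite {}T'E in hT' fST'.
have [codimE pE] := f_pres S T hS hT fST'.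
by exists S; split=> // w /fTS.
Qed.

End AllowabilityTransfer.

Lemma Gajer_track (X : topologicalType) n (s : nat -> set X) p
    (H : X * set_type unit_interval -> X) j (sigma : Delta j -> X)
    (phi : Delta j -> set_type unit_interval) :
  is_filtration n s -> continuous H -> (forall x t, same_stratum n s (H (x, t)) x) ->
  continuous phi -> Gajer n s p sigma -> Gajer n s p (fun z => H (sigma z, phi z)).
Proof.
move=> hs H_cont H_track phi_cont [sigma_cont sigma_full]; split.
  move=> z; apply: (@continuous_comp _ _ _ (fun z => (sigma z, phi z)) H); last exact: H_cont.
  exact: (cvg_pair (sigma_cont z) (phi_cont z)).
apply: full_controlled sigma_full => S z hS _; exists S; split=> // w Sw.
exact: (same_stratum_mem hs hS Sw (H_track _ _)).
Qed.

Section BarycentricTime.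
Variable n : nat.
Implicit Types (a : 'I_n.+1 -> 'I_2) (x : Delta n).

Definition bary_mass a x : RR := \sum_(i | a i == ord_max) set_val x 0 i.

Lemma bary_mass_subproof a x : unit_interval (bary_mass a x).
Proof.
have [x_ge0 x_sum1] : tsimplex n (set_val x) := set_valP x.
rewrite /unit_interval /= in_itv /= sumr_ge0 //=.
by rewrite -x_sum1 (bigID (fun i => a i == ord_max)) /= lerDl sumr_ge0.
Qed.

Definition bary_time a x : set_type unit_interval :=
  exist _ (bary_mass a x) (mem_set (bary_mass_subproof a x)).

Lemma continuous_bary_time a : continuous (bary_time a).
Proof.
apply: continuous_comp_initial; apply: continuous_big => [|i _].
  exact: (@add_continuous RR^o).
move=> x; apply: (@continuous_comp _ _ _ set_val (fun M : 'rV[RR]_n.+1 => M 0 i)).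
  exact: initial_continuous.
exact: coord_continuous.
Qed.

Lemma bary_mass_cst0 x : bary_mass (fun=> ord0) x = 0.
Proof. by rewrite /bary_mass big_pred0. Qed.

Lemma bary_mass_cst1 x : bary_mass (fun=> ord_max) x = 1.
Proof.
have [_ <-] : tsimplex n (set_val x) := set_valP x.
by apply: eq_bigl => i; rewrite eqxx.
Qed.

End BarycentricTime.

Lemma bary_time_simp_map m n (th : 'I_m.+1 -> 'I_n.+1) (a : 'I_n.+1 -> 'I_2) (x : Delta m) :
  bary_time (a \o th) x = bary_time a (simp_map th x).
Proof.
apply: val_inj; rewrite /= /bary_mass /= /simp_raw.
rewrite (partition_big th (fun k => a k == ord_max)) //=.
apply: eq_bigr => k ak; rewrite mxE; apply: eq_bigl => i.
by case: (eqVneq (th i) k) => [->|]; rewrite ?ak ?andbT ?andbF.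
Qed.

Lemma ss_homotopy_strat_homotopic (X : topologicalType) n (s : nat -> set X) p (h : X -> X) :
  is_filtration n s -> strat_homotopic n s n s h id ->
  ss_homotopy (Gajer n s p) (Gajer n s p) (fun _ sigma => h \o sigma) (fun _ => id).
Proof.
move=> hs h_id; have [H [H_cont H_track H0 H1]] := strat_homotopic_id_track hs h_id.
exists (fun _ sigma a z => H (sigma z, bary_time a z)); split.
- move=> k sigma a sigma_G _; apply: Gajer_track => //; exact: continuous_bary_time.
- by move=> k l th _ sigma a _ _; apply: funext => z /=; rewrite bary_time_simp_map.
- by move=> k sigma _; apply: funext => z; apply: H0; exact: bary_mass_cst0.
- by move=> k sigma _; apply: funext => z; apply: H1; exact: bary_mass_cst1.
Qed.

Theorem mainTheorem11 (X Y : topologicalType) (nX nY : nat)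
  (sX : nat -> set X) (sY : nat -> set Y)
  (p : set X -> \bar int) (q : set Y -> \bar int) (f : X -> Y) :
  is_filtration nX sX -> is_filtration nY sY ->
  is_perversity nX sX p -> is_perversity nY sY q ->
  strat_heq nX sX nY sY f ->
  (forall S, is_stratum nX sX S ->
     dual_perv nX sX p S = pullback_perv nY sY f (dual_perv nY sY q) S) ->
  ss_heq (Gajer nX sX p) (Gajer nY sY q) (fun n sigma => f \o sigma).
Proof.
move=> hX hY _ _ [f_strat [g [g_strat gf_id fg_id f_codim g_codim]]] dualE.
have gf_same := strat_homotopic_id_same_stratum hX gf_id.
have fg_same := strat_homotopic_id_same_stratum hY fg_id.
have f_refl := reflects_strata_left_inverse hX g_strat gf_same.
have g_refl := reflects_strata_left_inverse hY f_strat fg_same.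
have f_pres := dual_pullback_preserves_codim_perv hY f_codim dualE.
have g_pres := preserves_codim_perv_homotopy_inverse hX hY f_strat f_pres g_codim fg_same.
split=> //; first by move=> j sigma; exact: Gajer_comp.
exists (fun _ tau => g \o tau); split=> //; first by move=> j tau; exact: Gajer_comp.
- exact: (@ss_homotopy_strat_homotopic _ _ _ p _ hX gf_id).
- exact: (@ss_homotopy_strat_homotopic _ _ _ q _ hY fg_id).
Qed.
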